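(* Let $Y_1,\dots,Y_k$ be real numbers and let $M=\max\{0,\max_{1\le j\le k}(Y_1+\cdots+Y_j)\}$ be the maximum of the walk with steps $Y_1,\dots,Y_k$. Let $i\in\{1,\dots,k\}$ and $c\ge1$, and let $M'$ be the maximum of the walk with steps $Y_1,\dots,Y_i,cY_{i+1},\dots,cY_k$, defined in the same way. Then $M\le M'$. *)

From mathcomp Require Import all_boot all_order all_algebra.
From mathcomp Require Import reals.
Set Implicit Arguments. Unset Strict Implicit. Unset Printing Implicit Defensive.
Import Order.TTheory GRing.Theory Num.Theory.
Local Open Scope ring_scope.

(* Steps are indexed 1..k: Y 1, ..., Y k (values of Y at other indices unused). *)
Definition psum {R : realType} (Y : nat -> R) (j : nat) : R :=
  \sum_(1 <= l < j.+1) Y l.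

Definition walk_max {R : realType} (k : nat) (Y : nat -> R) : R :=
  Num.max 0 (\big[Num.max/0]_(1 <= j < k.+1) psum Y j).

Definition scale_after {R : realType} (i : nat) (c : R) (Y : nat -> R) : nat -> R :=
  fun l => if (l <= i)%N then Y l else c * Y l.

From mathcomp Require Import all_boot all_order all_algebra.
From mathcomp Require Import reals.
Import Order.TTheory GRing.Theory Num.Theory.
Local Open Scope ring_scope.

(* Up to step i both walks coincide; after it the scaled walk is the affine
   image S_i + c (S_j - S_i) of the original one. If S_j <= S_i, then S_j is
   already bounded by the common value S_i; otherwise S_j - S_i >= 0, so
   scaling it by c >= 1 can only raise the walk. *)

Lemma le_max_dilate {R : realDomainType} (s t : R) {c : R} :
  1 <= c -> t <= Num.max s (s + c * (t - s)).
Proof.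
move=> c_ge1; rewrite le_max; case: leP => // /ltW le_st.
by rewrite -lerBlDl ler_peMl // subr_ge0.
Qed.

Lemma walk_max_leP {R : realType} (k : nat) (Y : nat -> R) (x : R) :
  walk_max k Y <= x <-> 0 <= x /\ forall j, (1 <= j <= k)%N -> psum Y j <= x.
Proof.
rewrite /walk_max ge_max; split.
  case/andP=> x_ge0 bigmax_le_x; split=> // j j_range.
  apply: le_trans bigmax_le_x; apply: le_bigmax_seq => //.
  by rewrite mem_index_iota ltnS.
case=> x_ge0 psum_le_x; rewrite x_ge0 big_seq; apply: bigmax_le => // j.
by rewrite mem_index_iota ltnS => /psum_le_x.
Qed.

Lemma psum_le_walk_max {R : realType} (k : nat) (Y : nat -> R) (j : nat) :
  (1 <= j <= k)%N -> psum Y j <= walk_max k Y.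
Proof. by case/walk_max_leP: (lexx (walk_max k Y)) => _; apply. Qed.

Lemma walk_max_ge0 {R : realType} (k : nat) (Y : nat -> R) : 0 <= walk_max k Y.
Proof. by case/walk_max_leP: (lexx (walk_max k Y)). Qed.

Lemma psum_split {R : realType} (Y : nat -> R) {i j : nat} : (i <= j)%N ->
  psum Y j = psum Y i + \sum_(i.+1 <= l < j.+1) Y l.
Proof. by move=> le_ij; rewrite /psum -big_cat_nat. Qed.

Section ScaleAfter.
Context {R : realType} {i : nat} (c : R) (Y : nat -> R).

Lemma psum_scale_after_le {j : nat} :
  (j <= i)%N -> psum (scale_after i c Y) j = psum Y j.
Proof.
move=> le_ji; apply: eq_big_nat => l /andP[_ lt_lj].
by rewrite /scale_after (leq_trans _ le_ji).
Qed.

Lemma psum_scale_after_ge {j : nat} : (i <= j)%N ->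
  psum (scale_after i c Y) j = psum Y i + c * (psum Y j - psum Y i).
Proof.
move=> le_ij; rewrite (psum_split _ le_ij) [psum Y j](psum_split _ le_ij).
rewrite psum_scale_after_le // [_ + _ - _]addrC addKr mulr_sumr; congr (_ + _).
apply: eq_big_nat => l /andP[lt_il _].
by rewrite /scale_after leqNgt lt_il.
Qed.

End ScaleAfter.

Theorem lemmaC1 (R : realType) (k : nat) (Y : nat -> R) (i : nat) (c : R)
  (hi1 : (1 <= i)%N) (hik : (i <= k)%N) (hc : 1 <= c) :
  walk_max k Y <= walk_max k (scale_after i c Y).
Proof.
set Z := scale_after i c Y.
apply/walk_max_leP; split=> [|j j_range]; first exact: walk_max_ge0.
have psumZ_le := psum_le_walk_max k Z.
case: (leqP j i) => [le_ji | lt_ij].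
  by rewrite -(psum_scale_after_le c Y le_ji) psumZ_le.
apply: le_trans (le_max_dilate (psum Y i) (psum Y j) hc) _.
rewrite ge_max -(psum_scale_after_ge c Y (ltnW lt_ij)).
by rewrite -(psum_scale_after_le c Y (leqnn i)) !psumZ_le // hi1 hik.
Qed.
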